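(* Let $(\rho_0,p_0)$ solve the TOV system on $[0,R)$ with regular centre and mass function $m_0$. Suppose $r_s\in(0,R)$ satisfies $p_0(r_s)=0$, and set $M=m_0(r_s)>0$, with $\rho_0(r_s)>0$. For $\delta p_c$ near $0$, let $p_{\delta p_c}=p_0+\delta p$ be the deformed pressure of Theorem P1, and let $r_s(\delta p_c)$ be the zero of $p_{\delta p_c}$ near $r_s$ (with $r_s(0)=r_s$). Then $$\left.\frac{d r_s}{d\,\delta p_c}\right|_{0}=\frac{r_s^2\,(1-2M/r_s)^{3/2}\,e^{-2I_0(r_s)}}{\rho_0(r_s)\,M}>0,\qquad I_0(r)=\int_0^r g_0(s)\,ds,$$ and the compactness $\chi(\delta p_c)=2m_0(r_s(\delta p_c))/r_s(\delta p_c)$ satisfies $$\left.\frac{d\chi}{d\,\delta p_c}\right|_{0}=\frac{8\pi}{3}\,\bigl\{3\rho_0(r_s)-\bar\rho_0(r_s)\bigr\}\,r_s\,\left.\frac{d r_s}{d\,\delta p_c}\right|_{0},\qquad \bar\rho_0(r_s)=\frac{M}{\tfrac{4\pi}{3}r_s^3}.$$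
   Context: Units $G=c=1$. Mass function $m(r)=4\pi\int_0^r\rho(s)s^2ds$. $(\rho,p)$ ''solves the TOV system on $[0,R)$'' if $1-2m/r>0$ on $(0,R)$, $p\in C^1$, and $\frac{dp}{dr}=-\frac{[\rho+p][m+4\pi pr^3]}{r^2[1-2m/r]}$; ''regular centre'' means $\rho,p$ extend continuously to $r=0$. $g_0(r)=\frac{m_0+4\pi p_0r^3}{r^2[1-2m_0/r]}$. Theorem P1 deformation: with $D(r)=1+4\pi\delta p_c\int_0^r \frac{s e^{-2I_0(s)}}{\sqrt{1-2m_0(s)/s}}ds$, $\delta p(r)=\delta p_c\sqrt{1-2m_0(r)/r}\,e^{-2I_0(r)}/D(r)$; the density (and $m_0$) is unchanged. *)

From Stdlib Require Import Reals.
From Coquelicot Require Import Coquelicot.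
Open Scope R_scope.

Definition mass (rho : R -> R) (r : R) : R :=
  4 * PI * RInt (fun s => rho s * s ^ 2) 0 r.

(* TOV system on [0,R) with regular centre.  rho is taken continuous on
   [0,R) (right-continuous at 0 = regular centre); p is C^1 on (0,R),
   satisfies the TOV equation there, and extends continuously to r = 0. *)
Definition TOV_regular (rho p : R -> R) (Rr : R) : Prop :=
  (forall r, 0 < r < Rr -> 1 - 2 * mass rho r / r > 0) /\
  (forall r, 0 < r < Rr -> continuous rho r) /\
  (forall r, 0 < r < Rr -> continuous p r) /\
  (forall r, 0 < r < Rr ->
     is_derive p r
       (- ((rho r + p r) * (mass rho r + 4 * PI * p r * r ^ 3))
          / (r ^ 2 * (1 - 2 * mass rho r / r)))) /\
  (forall r, 0 < r < Rr -> continuous (Derive p) r) /\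
  filterlim rho (at_right 0) (locally (rho 0)) /\
  filterlim p (at_right 0) (locally (p 0)).

Definition g0 (rho p : R -> R) (r : R) : R :=
  (mass rho r + 4 * PI * p r * r ^ 3) / (r ^ 2 * (1 - 2 * mass rho r / r)).

Definition I0 (rho p : R -> R) (r : R) : R := RInt (g0 rho p) 0 r.

Definition Ddef (rho p : R -> R) (dpc r : R) : R :=
  1 + 4 * PI * dpc *
      RInt (fun s => s * exp (-2 * I0 rho p s) / sqrt (1 - 2 * mass rho s / s)) 0 r.

Definition delta_p (rho p : R -> R) (dpc r : R) : R :=
  dpc * sqrt (1 - 2 * mass rho r / r) * exp (-2 * I0 rho p r) / Ddef rho p dpc r.

Definition p_def (rho p : R -> R) (dpc r : R) : R := p r + delta_p rho p dpc r.

Definition zero_branch (rho p : R -> R) (Rr rs : R) (rsf : R -> R) : Prop :=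
  rsf 0 = rs /\ continuous rsf 0 /\
  exists eps : R, 0 < eps /\
    forall dpc, Rabs dpc < eps ->
      0 < rsf dpc < Rr /\ p_def rho p dpc (rsf dpc) = 0.

(* The deformed pressure is p_0 + dp_c A / (1 + dp_c J) with A = sqrt(1 - 2m_0/r) e^(-2 I_0)
   and J = (D - 1)/dp_c.  At the surface p_0(r_s) = 0, and the TOV equation gives
   p_0'(r_s) = - rho_0(r_s) M / (r_s^2 (1 - 2M/r_s)) < 0.  A mean-value/intermediate-value
   argument therefore produces, for small dp_c, zeros r with |r - r_s| = O(dp_c).  Along any
   continuous branch of zeros, writing p_0(r) = S(r) (r - r_s) with S continuous and
   S(r_s) = p_0'(r_s) (Caratheodory), one gets r_s(dp_c) - r_s = - dp_c A / ((1 + dp_c J) S),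
   so r_s'(0) = - A(r_s) / p_0'(r_s), which is the stated formula; the compactness follows by
   the chain rule from m_0' = 4 pi rho_0 r^2.
   To integrate down to the centre, rho_0 and p_0 are continued to r <= 0 by their central
   values; since m_0(r) = O(r^3), m_0/r^2 extends continuously by 0, which makes 1 - 2m_0/r and
   g_0 continuous at the centre. *)

From Stdlib Require Import Reals Lra ClassicalEpsilon Ranalysis5.
From Coquelicot Require Import Coquelicot.
Open Scope R_scope.

Lemma continuity_pt_cst (c x : R) : continuity_pt (fun _ => c) x.
Proof. now apply continuity_pt_const. Qed.

Lemma continuity_pt_identity (x : R) : continuity_pt (fun y => y) x.
Proof. apply derivable_continuous_pt, derivable_pt_id. Qed.

Lemma continuity_pt_exp_comp (f : R -> R) (x : R) :
  continuity_pt f x -> continuity_pt (fun y => exp (f y)) x.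
Proof. intros Hf; apply continuity_pt_filterlim, continuous_exp_comp, continuity_pt_filterlim, Hf. Qed.

Lemma continuity_pt_sqrt_comp (f : R -> R) (x : R) :
  continuity_pt f x -> continuity_pt (fun y => sqrt (f y)) x.
Proof. intros Hf; apply continuity_pt_filterlim, continuous_sqrt_comp, continuity_pt_filterlim, Hf. Qed.

Lemma is_derive_continuity_pt (f : R -> R) (x l : R) :
  is_derive f x l -> continuity_pt f x.
Proof. intros Hf; apply continuity_pt_filterlim; exact (ex_derive_continuous f x (ex_intro _ l Hf)). Qed.

Lemma continuity_pt_near (f : R -> R) (x eps : R) :
  continuity_pt f x -> 0 < eps -> locally x (fun y => Rabs (f y - f x) < eps).
Proof. intros Hf Heps; exact (proj1 (continuity_pt_locally f x) Hf (mkposreal eps Heps)). Qed.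

Lemma continuity_pt_locally_bounded (f : R -> R) (x : R) :
  continuity_pt f x -> locally x (fun y => Rabs (f y) <= Rabs (f x) + 1).
Proof.
  intros Hf; generalize (continuity_pt_near f x 1 Hf Rlt_0_1); apply filter_imp; intros y Hy.
  generalize (Rabs_triang (f x) (f y - f x)); rewrite Rplus_minus; lra.
Qed.

Definition extend0 (f : R -> R) (s : R) : R := if Rle_dec s 0 then f 0 else f s.

Lemma extend0_nonneg (f : R -> R) (s : R) : 0 <= s -> extend0 f s = f s.
Proof. intros Hs; unfold extend0; destruct (Rle_dec s 0); [f_equal|]; lra. Qed.

Lemma continuity_pt_extend0 (f : R -> R) (b x : R) :
  filterlim f (at_right 0) (locally (f 0)) ->
  (forall r, 0 < r < b -> continuity_pt f r) -> x < b ->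
  continuity_pt (extend0 f) x.
Proof.
  intros Hf0 Hf Hx. destruct (Rlt_le_dec 0 x) as [Hpos | [Hneg | ->]].
  - apply (continuity_pt_locally_ext f _ x); [exact Hpos | | apply Hf; lra].
    intros y Hy; apply Rabs_def2 in Hy; unfold extend0.
    destruct (Rle_dec y 0); [lra | reflexivity].
  - apply (continuity_pt_locally_ext (fun _ => f 0) _ (- x)); [lra | | apply continuity_pt_cst].
    intros y Hy; apply Rabs_def2 in Hy; unfold extend0.
    destruct (Rle_dec y 0); [reflexivity | lra].
  - apply continuity_pt_locally; intros eps.
    apply (filter_imp (fun y => 0 < y -> ball (f 0) eps (f y)));
      [| exact (proj1 (filterlim_locally _ _) Hf0 eps)].
    intros y Hy; unfold extend0.
    destruct (Rle_dec 0 0) as [_|]; [|lra].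
    destruct (Rle_dec y 0) as [|Hy0].
    + rewrite Rminus_diag, Rabs_R0; apply cond_pos.
    + apply Hy; lra.
Qed.

Lemma mass_extend0 (rho : R -> R) (r : R) : 0 <= r -> mass (extend0 rho) r = mass rho r.
Proof.
  intros Hr; unfold mass; f_equal; apply RInt_ext; intros x Hx.
  rewrite Rmin_left, Rmax_right in Hx by lra. rewrite extend0_nonneg by lra; reflexivity.
Qed.

Section IntegralBelow.
Variables (f : R -> R) (b : R).
Hypothesis f_cont : forall x, x < b -> continuity_pt f x.

Lemma ex_RInt_below (x y : R) : x < b -> y < b -> ex_RInt f x y.
Proof.
  intros Hx Hy; apply (ex_RInt_continuous (V := R_CompleteNormedModule)).
  intros z [_ Hz]; apply continuity_pt_filterlim, f_cont.
  apply (Rle_lt_trans _ _ _ Hz), Rmax_lub_lt; assumption.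
Qed.

Lemma is_derive_RInt_below (a x : R) : a < b -> x < b -> is_derive (RInt f a) x (f x).
Proof.
  intros Ha Hx; apply (is_derive_RInt f (RInt f a) a x); [| apply continuity_pt_filterlim, f_cont, Hx].
  assert (Hd : 0 < b - x) by lra. exists (mkposreal _ Hd); intros y Hy.
  change (Rabs (y - x) < b - x) in Hy; apply Rabs_def2 in Hy.
  apply (RInt_correct (V := R_CompleteNormedModule)), ex_RInt_below; lra.
Qed.

Lemma continuity_pt_RInt_below (a x : R) : a < b -> x < b -> continuity_pt (RInt f a) x.
Proof. intros Ha Hx; exact (is_derive_continuity_pt _ _ _ (is_derive_RInt_below a x Ha Hx)). Qed.

End IntegralBelow.

Definition ratio_sq (F : R -> R) (s : R) : R := if Rle_dec s 0 then 0 else F s / s ^ 2.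

Lemma continuity_pt_ratio_sq_0 (F : R -> R) (K eta : R) :
  0 < eta -> (forall s, 0 < s < eta -> Rabs (F s) <= K * s ^ 3) ->
  continuity_pt (ratio_sq F) 0.
Proof.
  intros Heta HF; apply continuity_pt_locally; intros eps.
  set (K' := Rabs K + 1).
  assert (HK' : 0 < K') by (unfold K'; generalize (Rabs_pos K); lra).
  assert (Hd : 0 < Rmin eta (eps / K'))
    by (apply Rmin_glb_lt; [lra | apply Rdiv_lt_0_compat; [apply cond_pos | lra]]).
  exists (mkposreal _ Hd); intros y Hy.
  change (Rabs (y - 0) < Rmin eta (eps / K')) in Hy; rewrite Rminus_0_r in Hy.
  unfold ratio_sq; destruct (Rle_dec 0 0) as [_|]; [|lra].
  destruct (Rle_dec y 0) as [|Hy0]; [rewrite Rminus_diag, Rabs_R0; apply cond_pos|].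
  apply Rnot_le_lt in Hy0; rewrite Rabs_right in Hy by lra.
  assert (Hy_eta : y < eta) by exact (Rlt_le_trans _ _ _ Hy (Rmin_l _ _)).
  assert (Hy_eps : K' * y < eps).
  { assert (Hy1 : y < eps / K') by exact (Rlt_le_trans _ _ _ Hy (Rmin_r _ _)).
    apply (Rmult_lt_compat_l K') in Hy1; [|lra].
    replace (K' * (eps / K')) with (pos eps) in Hy1 by (field; lra); exact Hy1. }
  assert (Hy2 : 0 < y ^ 2) by (apply pow_lt; lra).
  assert (HFy : Rabs (F y) <= K' * y * y ^ 2).
  { apply (Rle_trans _ _ _ (HF y (conj Hy0 Hy_eta))).
    replace (K' * y * y ^ 2) with (K' * y ^ 3) by ring.
    apply Rmult_le_compat_r; [apply pow_le; lra | unfold K'; generalize (Rle_abs K); lra]. }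
  rewrite Rminus_0_r; unfold Rdiv; rewrite Rabs_mult, Rabs_inv, (Rabs_right (y ^ 2)) by lra.
  apply (Rle_lt_trans _ (K' * y)); [| exact Hy_eps].
  apply (Rmult_le_reg_r (y ^ 2)); [lra|]. rewrite Rmult_assoc, Rinv_l, Rmult_1_r; lra.
Qed.

Lemma continuity_pt_ratio_sq (F : R -> R) (b K eta x : R) :
  0 < eta -> (forall s, 0 < s < eta -> Rabs (F s) <= K * s ^ 3) ->
  (forall r, 0 < r < b -> continuity_pt F r) -> x < b ->
  continuity_pt (ratio_sq F) x.
Proof.
  intros Heta HF Hc Hx. destruct (Rlt_le_dec 0 x) as [Hpos | [Hneg | ->]].
  - apply (continuity_pt_locally_ext (fun s => F s / s ^ 2) _ x); [exact Hpos | |].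
    + intros y Hy; apply Rabs_def2 in Hy; unfold ratio_sq.
      destruct (Rle_dec y 0); [lra | reflexivity].
    + apply continuity_pt_div; [apply Hc; lra | | apply pow_nonzero; lra].
      apply continuity_pt_mult; [apply continuity_pt_identity |].
      apply continuity_pt_mult; [apply continuity_pt_identity | apply continuity_pt_cst].
  - apply (continuity_pt_locally_ext (fun _ => 0) _ (- x)); [lra | | apply continuity_pt_cst].
    intros y Hy; apply Rabs_def2 in Hy; unfold ratio_sq.
    destruct (Rle_dec y 0); [reflexivity | lra].
  - exact (continuity_pt_ratio_sq_0 F K eta Heta HF).
Qed.

Lemma decrease_of_Derive_lt (p : R -> R) (x y c : R) :
  x < y -> (forall r, x <= r <= y -> ex_derive p r /\ Derive p r < - c) ->
  p y - p x < - c * (y - x).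
Proof.
  intros Hxy Hd. destruct (MVT_gen p x y (Derive p)) as [z [Hz Heq]]; simpl in *.
  - intros r Hr; rewrite Rmin_left, Rmax_right in Hr by lra.
    apply Derive_correct, Hd; lra.
  - intros r Hr; rewrite Rmin_left, Rmax_right in Hr by lra.
    apply (is_derive_continuity_pt _ _ (Derive p r)), Derive_correct, Hd; lra.
  - rewrite Rmin_left, Rmax_right in Hz by lra.
    rewrite Heq; apply Rmult_lt_compat_r; [lra | apply Hd; lra].
Qed.

Lemma perturbation_bound (h f j F B : R) :
  Rabs h * B <= 1 / 2 -> Rabs f <= F -> Rabs j <= B ->
  1 / 2 <= 1 + h * j /\ Rabs (h * (f / (1 + h * j))) <= 2 * F * Rabs h.
Proof.
  intros HhB Hf Hj.
  assert (Hhj : Rabs (h * j) <= 1 / 2).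
  { rewrite Rabs_mult; apply (Rle_trans _ (Rabs h * B)); [|exact HhB].
    apply Rmult_le_compat_l; [apply Rabs_pos | exact Hj]. }
  apply Rabs_le_between in Hhj.
  assert (Hinv : / (1 + h * j) <= 2).
  { replace 2 with (/ (1 / 2)) by field; apply Rinv_le_contravar; lra. }
  assert (0 < / (1 + h * j)) by (apply Rinv_0_lt_compat; lra).
  split; [lra|].
  unfold Rdiv; rewrite !Rabs_mult, Rabs_inv, (Rabs_right (1 + _)) by lra.
  replace (2 * F * Rabs h) with (Rabs h * (F * 2)) by ring.
  apply Rmult_le_compat_l; [apply Rabs_pos|].
  apply Rmult_le_compat; [apply Rabs_pos | lra | exact Hf | exact Hinv].
Qed.

Lemma perturbed_zero_between (p f J : R -> R) (rs a c F B h : R) :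
  0 < a -> p rs = 0 -> Rabs h * B <= 1 / 2 -> 2 * F * Rabs h < c * a ->
  (forall r, Rabs (r - rs) <= a ->
     (ex_derive p r /\ Derive p r < - c) /\ (continuity_pt f r /\ Rabs (f r) <= F) /\
     (continuity_pt J r /\ Rabs (J r) <= B)) ->
  exists r, Rabs (r - rs) <= a /\ p r + h * (f r / (1 + h * J r)) = 0.
Proof.
  intros Ha Hp0 HhB HFa Hnear.
  set (E r := h * (f r / (1 + h * J r))).
  assert (HE : forall r, Rabs (r - rs) <= a -> 1 / 2 <= 1 + h * J r /\ Rabs (E r) <= 2 * F * Rabs h).
  { intros r Hr; destruct (Hnear r Hr) as (_ & [_ Hf] & [_ HJ]).
    exact (perturbation_bound h (f r) (J r) F B HhB Hf HJ). }
  assert (Hdec : forall x y, rs - a <= x < y -> y <= rs + a -> p y - p x < - c * (y - x)).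
  { intros x y Hx Hy; apply decrease_of_Derive_lt; [lra|].
    intros r Hr; apply Hnear, Rabs_le_between'; lra. }
  assert (Hleft : c * a < p (rs - a)) by (generalize (Hdec (rs - a) rs); lra).
  assert (Hright : p (rs + a) < - (c * a)) by (generalize (Hdec rs (rs + a)); lra).
  assert (HEl := fun H => proj2 (HE (rs - a) H)); assert (HEr := fun H => proj2 (HE (rs + a) H)).
  rewrite Rabs_le_between' in HEl, HEr.
  destruct (IVT_interv (fun r => - (p r + E r)) (rs - a) (rs + a)) as (z & Hz & Hqz).
  - intros r Hr; assert (Hr' : Rabs (r - rs) <= a) by (apply Rabs_le_between'; lra).
    destruct (Hnear r Hr') as ([Hpd _] & [Hfc _] & [HJc _]); pose proof (proj1 (HE r Hr')).
    apply continuity_pt_opp, continuity_pt_plus.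
    + apply (is_derive_continuity_pt _ _ (Derive p r)), Derive_correct, Hpd.
    + apply continuity_pt_mult; [apply continuity_pt_cst|].
      apply continuity_pt_div; [exact Hfc | | lra].
      apply continuity_pt_plus; [apply continuity_pt_cst|].
      apply continuity_pt_mult; [apply continuity_pt_cst | exact HJc].
  - lra.
  - apply Rabs_le_between in HEl; [|lra]; lra.
  - apply Rabs_le_between in HEr; [|lra]; lra.
  - exists z; split; [apply Rabs_le_between'; lra | unfold E in Hqz; lra].
Qed.

Lemma perturbed_zeros_near (p f J : R -> R) (rs : R) :
  p rs = 0 -> Derive p rs < 0 -> continuity_pt (Derive p) rs ->
  locally rs (fun r => ex_derive p r /\ continuity_pt f r /\ continuity_pt J r) ->
  exists k, 0 <= k /\ locally 0 (fun h => exists r,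
    Rabs (r - rs) <= k * Rabs h /\ p r + h * (f r / (1 + h * J r)) = 0).
Proof.
  intros Hp0 Hneg HDc Hloc.
  set (c := - Derive p rs / 2); set (F := Rabs (f rs) + 1); set (B := Rabs (J rs) + 1).
  assert (Hc : 0 < c) by (unfold c; lra).
  assert (HF : 1 <= F) by (unfold F; generalize (Rabs_pos (f rs)); lra).
  assert (HB : 1 <= B) by (unfold B; generalize (Rabs_pos (J rs)); lra).
  destruct (locally_singleton _ _ Hloc) as (_ & Hfc & HJc).
  assert (Hnear : locally rs (fun r =>
    (ex_derive p r /\ Derive p r < - c) /\ (continuity_pt f r /\ Rabs (f r) <= F) /\
    (continuity_pt J r /\ Rabs (J r) <= B))).
  { generalize (filter_and _ _ Hloc (filter_and _ _ (continuity_pt_near _ _ c HDc Hc)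
      (filter_and _ _ (continuity_pt_locally_bounded _ _ Hfc) (continuity_pt_locally_bounded _ _ HJc)))).
    apply filter_imp; intros r ((Hd & Hfr & HJr) & HD & Hf & HJ).
    apply Rabs_def2 in HD; unfold c in *; repeat split; auto; lra. }
  destruct Hnear as [eta Heta].
  set (k := (2 * F + 1) / c).
  assert (Hk : 0 < k) by (unfold k; apply Rdiv_lt_0_compat; lra).
  exists k; split; [lra|].
  assert (Heps : 0 < Rmin (1 / (2 * B)) (eta / (k + 1))).
  { apply Rmin_glb_lt; apply Rdiv_lt_0_compat; try lra; apply cond_pos. }
  exists (mkposreal _ Heps); intros h Hh.
  change (Rabs (h - 0) < Rmin (1 / (2 * B)) (eta / (k + 1))) in Hh; rewrite Rminus_0_r in Hh.
  destruct (Req_dec h 0) as [-> | Hh0].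
  { exists rs; rewrite Rminus_diag, Rabs_R0, Rmult_0_r, Hp0; split; [lra | ring]. }
  assert (Hhpos : 0 < Rabs h) by (apply Rabs_pos_lt, Hh0).
  assert (HhB : Rabs h * B <= 1 / 2).
  { assert (Hh1 : Rabs h <= 1 / (2 * B)) by exact (Rlt_le _ _ (Rlt_le_trans _ _ _ Hh (Rmin_l _ _))).
    apply (Rmult_le_compat_r B) in Hh1; [|lra].
    replace (1 / (2 * B) * B) with (1 / 2) in Hh1 by (field; lra); exact Hh1. }
  assert (Hkh : k * Rabs h < eta).
  { assert (Hh1 : Rabs h < eta / (k + 1)) by exact (Rlt_le_trans _ _ _ Hh (Rmin_r _ _)).
    apply (Rmult_lt_compat_l (k + 1)) in Hh1; [|lra].
    replace ((k + 1) * (eta / (k + 1))) with (pos eta) in Hh1 by (field; lra); lra. }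
  apply (perturbed_zero_between p f J rs (k * Rabs h) c F B h).
  - apply Rmult_lt_0_compat; lra.
  - exact Hp0.
  - exact HhB.
  - replace (c * (k * Rabs h)) with ((2 * F + 1) * Rabs h) by (unfold k; field; lra). lra.
  - intros r Hr; apply Heta; change (Rabs (r - rs) < eta); lra.
Qed.

Lemma branch_of_zeros (G : R -> R -> Prop) (rs k : R) :
  0 <= k -> locally 0 (fun h => exists r, Rabs (r - rs) <= k * Rabs h /\ G h r) ->
  exists u, u 0 = rs /\ continuity_pt u 0 /\ locally 0 (fun h => G h (u h)).
Proof.
  intros Hk [eps Heps].
  assert (Hpick : forall h, exists r, Rabs (h - 0) < eps -> Rabs (r - rs) <= k * Rabs h /\ G h r).
  { intros h; destruct (Rlt_dec (Rabs (h - 0)) eps) as [Hh | Hh].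
    - destruct (Heps h Hh) as [r Hr]; exists r; intros _; exact Hr.
    - exists rs; intros Hh'; contradiction. }
  set (u h := proj1_sig (constructive_indefinite_description _ (Hpick h))).
  assert (Hu : forall h, Rabs (h - 0) < eps -> Rabs (u h - rs) <= k * Rabs h /\ G h (u h)).
  { intros h; unfold u; destruct (constructive_indefinite_description _ _) as [r Hr]; exact Hr. }
  assert (Hu0 : u 0 = rs).
  { destruct (Hu 0) as [H0 _]; [rewrite Rminus_0_r, Rabs_R0; apply cond_pos|].
    rewrite Rabs_R0, Rmult_0_r in H0; apply Rabs_le_between' in H0; lra. }
  exists u; split; [exact Hu0 | split].
  - apply continuity_pt_locally; intros e.
    assert (Hd : 0 < Rmin eps (e / (k + 1))).
    { apply Rmin_glb_lt; [apply cond_pos | apply Rdiv_lt_0_compat; [apply cond_pos | lra]]. }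
    exists (mkposreal _ Hd); intros h Hh.
    change (Rabs (h - 0) < Rmin eps (e / (k + 1))) in Hh.
    destruct (Hu h (Rlt_le_trans _ _ _ Hh (Rmin_l _ _))) as [Hbound _].
    rewrite Hu0; rewrite Rminus_0_r in Hh.
    assert (Hh1 : Rabs h < e / (k + 1)) by exact (Rlt_le_trans _ _ _ Hh (Rmin_r _ _)).
    apply (Rmult_lt_compat_l (k + 1)) in Hh1; [|lra].
    replace ((k + 1) * (e / (k + 1))) with (pos e) in Hh1 by (field; lra).
    generalize (Rabs_pos h); nra.
  - exists eps; intros h Hh; apply Hu, Hh.
Qed.

Definition secant_slope (p : R -> R) (a d r : R) : R :=
  if Req_EM_T r a then d else (p r - p a) / (r - a).

Lemma secant_slope_spec (p : R -> R) (a d r : R) : p r - p a = secant_slope p a d r * (r - a).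
Proof. unfold secant_slope; destruct (Req_EM_T r a) as [-> | Hne]; [ring | field; lra]. Qed.

Lemma continuity_pt_secant_slope (p : R -> R) (a d : R) :
  is_derive p a d -> continuity_pt (secant_slope p a d) a.
Proof.
  intros Hd; apply is_derive_Reals in Hd; apply continuity_pt_locally; intros eps.
  destruct (Hd eps (cond_pos eps)) as [del Hdel]; exists del; intros y Hy.
  change (Rabs (y - a) < del) in Hy; unfold secant_slope.
  destruct (Req_EM_T a a) as [_ | ]; [|congruence].
  destruct (Req_EM_T y a) as [-> | Hne]; [rewrite Rminus_diag, Rabs_R0; apply cond_pos|].
  specialize (Hdel (y - a)); rewrite Rplus_minus in Hdel.
  apply Hdel; [lra | exact Hy].
Qed.

Lemma is_derive_caratheodory (u G : R -> R) (x : R) :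
  continuity_pt G x -> locally x (fun y => u y - u x = G y * (y - x)) ->
  is_derive u x (G x).
Proof.
  intros HG Hu; apply is_derive_Reals; intros eps Heps.
  destruct (filter_and _ _ Hu (continuity_pt_near G x eps HG Heps)) as [del Hdel].
  exists del; intros h Hh0 Hh.
  destruct (Hdel (x + h)) as [Heq Hclose].
  { change (Rabs (x + h - x) < del); rewrite Rplus_minus_l; exact Hh. }
  rewrite Heq; replace (G (x + h) * (x + h - x) / h) with (G (x + h)) by (field; exact Hh0).
  exact Hclose.
Qed.

Lemma implicit_branch_derive (p Q u : R -> R) (rs d : R) :
  is_derive p rs d -> d <> 0 -> p rs = 0 -> continuity_pt Q 0 ->
  continuity_pt u 0 -> u 0 = rs -> locally 0 (fun h => p (u h) + h * Q h = 0) ->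
  is_derive u 0 (- Q 0 / d).
Proof.
  intros Hp Hd Hp0 HQ Hu Hu0 Hzero.
  set (S h := secant_slope p rs d (u h)).
  assert (HS0 : S 0 = d).
  { unfold S, secant_slope; rewrite Hu0; destruct (Req_EM_T rs rs); [reflexivity | congruence]. }
  assert (HS : continuity_pt S 0).
  { apply (continuity_pt_comp u (secant_slope p rs d)); [exact Hu|].
    rewrite Hu0; apply continuity_pt_secant_slope, Hp. }
  rewrite <- HS0; apply (is_derive_caratheodory u (fun h => - Q h / S h)).
  - apply continuity_pt_div; [apply continuity_pt_opp, HQ | exact HS | lra].
  - generalize (filter_and _ _ Hzero (continuity_pt_near S 0 (Rabs d) HS (Rabs_pos_lt d Hd))).
    apply filter_imp; intros h [Hzh HSh].
    assert (HSne : S h <> 0).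
    { intros Hz; rewrite Hz, HS0, Rminus_0_l, Rabs_Ropp in HSh; lra. }
    apply (Rmult_eq_reg_l (S h)); [|exact HSne].
    rewrite Hu0; unfold S; rewrite <- secant_slope_spec; fold (S h).
    replace (p (u h)) with (- (h * Q h)) by lra.
    rewrite Hp0; field; exact HSne.
Qed.

Section TOV.
Variables (rho p : R -> R) (Rr : R).
Hypothesis Htov : TOV_regular rho p Rr.
Hypothesis Rr_pos : 0 < Rr.

Let metric_pos : forall r, 0 < r < Rr -> 1 - 2 * mass rho r / r > 0 := proj1 Htov.
Let rho_cont : forall r, 0 < r < Rr -> continuous rho r := proj1 (proj2 Htov).
Let p_cont : forall r, 0 < r < Rr -> continuous p r := proj1 (proj2 (proj2 Htov)).
Let p_tov : forall r, 0 < r < Rr ->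
  is_derive p r (- ((rho r + p r) * (mass rho r + 4 * PI * p r * r ^ 3))
                 / (r ^ 2 * (1 - 2 * mass rho r / r))) :=
  proj1 (proj2 (proj2 (proj2 Htov))).
Let Dp_cont : forall r, 0 < r < Rr -> continuous (Derive p) r :=
  proj1 (proj2 (proj2 (proj2 (proj2 Htov)))).
Let rho_centre : filterlim rho (at_right 0) (locally (rho 0)) :=
  proj1 (proj2 (proj2 (proj2 (proj2 (proj2 Htov))))).
Let p_centre : filterlim p (at_right 0) (locally (p 0)) :=
  proj2 (proj2 (proj2 (proj2 (proj2 (proj2 Htov))))).

(** [deform_amplitude] and [deform_integral] are the [A] and [J] of the header; see [p_def_eq]. *)
Definition metric_factor (s : R) : R := 1 - 2 * s * ratio_sq (mass (extend0 rho)) s.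
Definition g0_ext (s : R) : R :=
  (ratio_sq (mass (extend0 rho)) s + 4 * PI * extend0 p s * s) / metric_factor s.
Definition I0_ext (r : R) : R := RInt g0_ext 0 r.
Definition deform_amplitude (r : R) : R := sqrt (metric_factor r) * exp (-2 * I0_ext r).
Definition deform_integral (r : R) : R :=
  4 * PI * RInt (fun s => s * exp (-2 * I0_ext s) / sqrt (metric_factor s)) 0 r.

Lemma extend0_rho_cont (x : R) : x < Rr -> continuity_pt (extend0 rho) x.
Proof.
  apply (continuity_pt_extend0 _ Rr); [exact rho_centre|].
  intros r Hr; apply continuity_pt_filterlim, rho_cont, Hr.
Qed.

Lemma mass_integrand_cont (x : R) : x < Rr -> continuity_pt (fun s => extend0 rho s * s ^ 2) x.
Proof.
  intros Hx; apply continuity_pt_mult; [exact (extend0_rho_cont x Hx)|].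
  apply continuity_pt_mult; [apply continuity_pt_identity|].
  apply continuity_pt_mult; [apply continuity_pt_identity | apply continuity_pt_cst].
Qed.

Lemma mass_ext_derive (x : R) : x < Rr ->
  is_derive (mass (extend0 rho)) x (4 * PI * (extend0 rho x * x ^ 2)).
Proof.
  intros Hx; unfold mass; apply is_derive_scal.
  exact (is_derive_RInt_below _ Rr mass_integrand_cont 0 x Rr_pos Hx).
Qed.

Lemma mass_ext_cubic : exists K eta, 0 < eta /\
  forall s, 0 < s < eta -> Rabs (mass (extend0 rho) s) <= K * s ^ 3.
Proof.
  destruct (continuity_pt_locally_bounded _ _ (extend0_rho_cont 0 Rr_pos)) as [d Hd].
  set (C := Rabs (extend0 rho 0) + 1).
  exists (4 * PI * C), (Rmin d Rr).
  split; [apply Rmin_glb_lt; [apply cond_pos | exact Rr_pos]|].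
  intros s Hs.
  assert (Hsd : s < d) by exact (Rlt_le_trans _ _ _ (proj2 Hs) (Rmin_l _ _)).
  assert (HsR : s < Rr) by exact (Rlt_le_trans _ _ _ (proj2 Hs) (Rmin_r _ _)).
  unfold mass; rewrite Rabs_mult, (Rabs_right (4 * PI)) by (generalize PI_RGT_0; lra).
  replace (4 * PI * C * s ^ 3) with (4 * PI * ((s - 0) * (C * s ^ 2))) by ring.
  apply Rmult_le_compat_l; [generalize PI_RGT_0; lra|].
  apply abs_RInt_le_const; [lra | apply (ex_RInt_below _ Rr); [exact mass_integrand_cont | lra | lra]|].
  intros t Ht; rewrite Rabs_mult, (Rabs_right (t ^ 2)) by (apply Rle_ge, pow2_ge_0).
  apply Rmult_le_compat; [apply Rabs_pos | apply pow2_ge_0 | | apply pow_incr; lra].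
  apply Hd; change (Rabs (t - 0) < d); rewrite Rminus_0_r, Rabs_right; lra.
Qed.

Lemma p_ex_derive (r : R) : 0 < r < Rr -> ex_derive p r.
Proof. intros Hr; eexists; exact (p_tov r Hr). Qed.

Lemma extend0_p_cont (x : R) : x < Rr -> continuity_pt (extend0 p) x.
Proof.
  apply (continuity_pt_extend0 _ Rr); [exact p_centre|].
  intros r Hr; apply continuity_pt_filterlim, p_cont, Hr.
Qed.

Lemma mass_ratio_cont (x : R) : x < Rr -> continuity_pt (ratio_sq (mass (extend0 rho))) x.
Proof.
  destruct mass_ext_cubic as (K & eta & Heta & Hcubic).
  intros Hx; apply (continuity_pt_ratio_sq _ Rr K eta); [exact Heta | exact Hcubic | | exact Hx].
  intros r Hr; exact (is_derive_continuity_pt _ _ _ (mass_ext_derive r (proj2 Hr))).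
Qed.

Lemma metric_factor_eq (s : R) : 0 < s -> metric_factor s = 1 - 2 * mass rho s / s.
Proof.
  intros Hs; unfold metric_factor, ratio_sq; destruct (Rle_dec s 0); [lra|].
  rewrite mass_extend0 by lra; field; lra.
Qed.

Lemma metric_factor_pos (s : R) : s < Rr -> 0 < metric_factor s.
Proof.
  intros Hs; destruct (Rle_dec s 0) as [Hneg | Hpos].
  - unfold metric_factor, ratio_sq; destruct (Rle_dec s 0); [lra | contradiction].
  - rewrite metric_factor_eq by lra; apply metric_pos; lra.
Qed.

Lemma metric_factor_cont (x : R) : x < Rr -> continuity_pt metric_factor x.
Proof.
  intros Hx; unfold metric_factor; apply continuity_pt_minus; [apply continuity_pt_cst|].
  apply continuity_pt_mult; [|apply mass_ratio_cont, Hx].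
  apply continuity_pt_mult; [apply continuity_pt_cst | apply continuity_pt_identity].
Qed.

Lemma g0_ext_eq (s : R) : 0 < s < Rr -> g0 rho p s = g0_ext s.
Proof.
  intros Hs; unfold g0, g0_ext; rewrite metric_factor_eq by lra.
  unfold ratio_sq; destruct (Rle_dec s 0); [lra|].
  rewrite mass_extend0, extend0_nonneg by lra.
  assert (Hom : 0 < 1 - 2 * mass rho s / s) by exact (metric_pos s Hs).
  set (om := 1 - 2 * mass rho s / s) in *.
  field; split; lra.
Qed.

Lemma g0_ext_cont (x : R) : x < Rr -> continuity_pt g0_ext x.
Proof.
  intros Hx; unfold g0_ext; apply continuity_pt_div.
  - apply continuity_pt_plus; [apply mass_ratio_cont, Hx|].
    apply continuity_pt_mult; [|apply continuity_pt_identity].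
    apply continuity_pt_mult; [apply continuity_pt_cst | apply extend0_p_cont, Hx].
  - apply metric_factor_cont, Hx.
  - apply Rgt_not_eq, metric_factor_pos, Hx.
Qed.

Lemma I0_ext_eq (r : R) : 0 <= r < Rr -> I0 rho p r = I0_ext r.
Proof.
  intros Hr; unfold I0, I0_ext; apply RInt_ext; intros x Hx.
  rewrite Rmin_left, Rmax_right in Hx by lra; apply g0_ext_eq; lra.
Qed.

Lemma I0_ext_cont (x : R) : x < Rr -> continuity_pt I0_ext x.
Proof. intros Hx; exact (continuity_pt_RInt_below _ Rr g0_ext_cont 0 x Rr_pos Hx). Qed.

Lemma deform_amplitude_cont (x : R) : x < Rr -> continuity_pt deform_amplitude x.
Proof.
  intros Hx; unfold deform_amplitude; apply continuity_pt_mult.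
  - apply continuity_pt_sqrt_comp, metric_factor_cont, Hx.
  - apply continuity_pt_exp_comp, continuity_pt_mult; [apply continuity_pt_cst | apply I0_ext_cont, Hx].
Qed.

Lemma deform_amplitude_pos (x : R) : x < Rr -> 0 < deform_amplitude x.
Proof.
  intros Hx; apply Rmult_lt_0_compat; [apply sqrt_lt_R0, metric_factor_pos, Hx | apply exp_pos].
Qed.

Lemma deform_integral_cont (x : R) : x < Rr -> continuity_pt deform_integral x.
Proof.
  intros Hx; unfold deform_integral; apply continuity_pt_mult; [apply continuity_pt_cst|].
  apply (continuity_pt_RInt_below _ Rr); [|exact Rr_pos | exact Hx].
  intros y Hy; apply continuity_pt_div.
  - apply continuity_pt_mult; [apply continuity_pt_identity|].
    apply continuity_pt_exp_comp, continuity_pt_mult; [apply continuity_pt_cst | apply I0_ext_cont, Hy].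
  - apply continuity_pt_sqrt_comp, metric_factor_cont, Hy.
  - apply Rgt_not_eq, sqrt_lt_R0, metric_factor_pos, Hy.
Qed.

Lemma p_def_eq (dpc r : R) : 0 < r < Rr ->
  p_def rho p dpc r = p r + dpc * (deform_amplitude r / (1 + dpc * deform_integral r)).
Proof.
  intros Hr; unfold p_def, delta_p, Ddef, deform_amplitude, deform_integral.
  rewrite I0_ext_eq, <- metric_factor_eq by lra.
  replace (RInt (fun s => s * exp (-2 * I0 rho p s) / sqrt (1 - 2 * mass rho s / s)) 0 r)
    with (RInt (fun s => s * exp (-2 * I0_ext s) / sqrt (metric_factor s)) 0 r).
  - set (X := RInt _ 0 r).
    replace (1 + dpc * (4 * PI * X)) with (1 + 4 * PI * dpc * X) by ring.
    unfold Rdiv; ring.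
  - apply RInt_ext; intros x Hx; rewrite Rmin_left, Rmax_right in Hx by lra.
    rewrite I0_ext_eq, metric_factor_eq by lra; reflexivity.
Qed.

Lemma compactness_derive (r : R) : 0 < r < Rr ->
  is_derive (fun s => 2 * mass rho s / s) r (8 * PI * rho r * r - 2 * mass rho r / r ^ 2).
Proof.
  intros Hr; apply (is_derive_ext_loc (fun s => 2 * mass (extend0 rho) s / s)).
  - exists (mkposreal r (proj1 Hr)); intros s Hs.
    change (Rabs (s - r) < r) in Hs; apply Rabs_def2 in Hs.
    rewrite mass_extend0 by lra; reflexivity.
  - replace (8 * PI * rho r * r - 2 * mass rho r / r ^ 2) with
      ((2 * (4 * PI * (extend0 rho r * r ^ 2)) * r - 2 * mass (extend0 rho) r * 1) / r ^ 2).
    + apply (is_derive_div (fun s => 2 * mass (extend0 rho) s) (fun s => s)); [| apply is_derive_Reals, derivable_pt_lim_id | lra].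
      apply is_derive_scal, mass_ext_derive; lra.
    + rewrite extend0_nonneg, mass_extend0 by lra; field; lra.
Qed.

Variable rs : R.
Hypothesis Hrs : 0 < rs < Rr.
Hypothesis Hprs : p rs = 0.
Hypothesis HM : 0 < mass rho rs.
Hypothesis Hrho : 0 < rho rs.

Lemma surface_Derive : Derive p rs = - (rho rs * mass rho rs) / (rs ^ 2 * metric_factor rs).
Proof.
  rewrite (is_derive_unique _ _ _ (p_tov rs Hrs)), Hprs, metric_factor_eq by lra.
  unfold Rdiv; ring.
Qed.

Lemma surface_Derive_neg : Derive p rs < 0.
Proof.
  rewrite surface_Derive, Rdiv_opp_l.
  enough (0 < rho rs * mass rho rs / (rs ^ 2 * metric_factor rs)) by lra.
  apply Rdiv_lt_0_compat; [nra|].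
  apply Rmult_lt_0_compat; [apply pow_lt; lra | apply metric_factor_pos; lra].
Qed.

Lemma zero_branch_exists : exists rsf, zero_branch rho p Rr rs rsf.
Proof.
  assert (Hnear : locally rs (fun r => 0 < r /\ r < Rr)) by exact (open_and _ _ (open_gt 0) (open_lt Rr) rs Hrs).
  destruct (perturbed_zeros_near p deform_amplitude deform_integral rs) as (k & Hk & Hzeros).
  - exact Hprs.
  - exact surface_Derive_neg.
  - apply continuity_pt_filterlim, Dp_cont, Hrs.
  - generalize Hnear; apply filter_imp; intros r Hr; repeat split.
    + apply p_ex_derive, Hr.
    + apply deform_amplitude_cont, Hr.
    + apply deform_integral_cont, Hr.
  destruct (branch_of_zeros
    (fun h r => p r + h * (deform_amplitude r / (1 + h * deform_integral r)) = 0)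
    rs k Hk Hzeros) as (u & Hu0 & Huc & Hzero).
  exists u; split; [exact Hu0 | split; [apply continuity_pt_filterlim, Huc|]].
  assert (Hrange : locally 0 (fun h => 0 < u h /\ u h < Rr)).
  { apply continuity_pt_filterlim in Huc; rewrite Hu0 in Huc; exact (Huc _ Hnear). }
  destruct (filter_and _ _ Hrange Hzero) as [eps Heps].
  exists eps; split; [apply cond_pos|]; intros dpc Hdpc.
  destruct (Heps dpc) as [Hr Hz]; [change (Rabs (dpc - 0) < eps); rewrite Rminus_0_r; exact Hdpc|].
  split; [exact Hr | rewrite p_def_eq; assumption].
Qed.

Lemma zero_branch_derive (rsf : R -> R) : zero_branch rho p Rr rs rsf ->
  is_derive rsf 0 (- deform_amplitude rs / Derive p rs).
Proof.
  intros (Hu0 & Huc & eps & Heps & Hzero); apply continuity_pt_filterlim in Huc.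
  set (Q h := deform_amplitude (rsf h) / (1 + h * deform_integral (rsf h))).
  replace (deform_amplitude rs) with (Q 0) by (unfold Q; rewrite Hu0, Rmult_0_l, Rplus_0_r; field).
  apply (implicit_branch_derive p Q rsf rs).
  - apply Derive_correct, p_ex_derive, Hrs.
  - apply Rlt_not_eq, surface_Derive_neg.
  - exact Hprs.
  - apply continuity_pt_div.
    + apply (continuity_pt_comp rsf deform_amplitude); [exact Huc|].
      rewrite Hu0; apply deform_amplitude_cont, Hrs.
    + apply continuity_pt_plus; [apply continuity_pt_cst|].
      apply continuity_pt_mult; [apply continuity_pt_identity|].
      apply (continuity_pt_comp rsf deform_integral); [exact Huc|].
      rewrite Hu0; apply deform_integral_cont, Hrs.
    + rewrite Rmult_0_l, Rplus_0_r; lra.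
  - exact Huc.
  - exact Hu0.
  - exists (mkposreal eps Heps); intros h Hh.
    change (Rabs (h - 0) < eps) in Hh; rewrite Rminus_0_r in Hh.
    destruct (Hzero h Hh) as [Hr Hz]; rewrite p_def_eq in Hz by exact Hr; exact Hz.
Qed.

Lemma surface_speed_pos : 0 < - deform_amplitude rs / Derive p rs.
Proof.
  rewrite Rdiv_opp_l, <- Rdiv_opp_r; apply Rdiv_lt_0_compat.
  - apply deform_amplitude_pos, Hrs.
  - generalize surface_Derive_neg; lra.
Qed.

Lemma surface_speed_eq : - deform_amplitude rs / Derive p rs =
  rs ^ 2 * Rpower (1 - 2 * mass rho rs / rs) (3 / 2) * exp (-2 * I0 rho p rs)
  / (rho rs * mass rho rs).
Proof.
  assert (Hom := metric_factor_pos rs (proj2 Hrs)).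
  assert (Hsq : 0 < sqrt (metric_factor rs)) by (apply sqrt_lt_R0, Hom).
  rewrite surface_Derive, <- metric_factor_eq, I0_ext_eq by lra.
  replace (3 / 2) with (1 + / 2) by field.
  rewrite Rpower_plus, Rpower_1, Rpower_sqrt by exact Hom.
  unfold deform_amplitude; field; repeat split; try lra.
Qed.

End TOV.

Theorem mainTheorem3 (rho0 p0 : R -> R) (Rr rs : R) :
  TOV_regular rho0 p0 Rr ->
  0 < rs < Rr ->
  p0 rs = 0 ->
  0 < mass rho0 rs ->
  0 < rho0 rs ->
  let M := mass rho0 rs in
  let drs := rs ^ 2 * Rpower (1 - 2 * M / rs) (3 / 2) * exp (-2 * I0 rho0 p0 rs)
             / (rho0 rs * M) in
  let rhobar := M / (4 * PI / 3 * rs ^ 3) in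
  (exists rsf, zero_branch rho0 p0 Rr rs rsf) /\
  forall rsf, zero_branch rho0 p0 Rr rs rsf ->
    is_derive rsf 0 drs /\ 0 < drs /\
    is_derive (fun dpc => 2 * mass rho0 (rsf dpc) / rsf dpc) 0
      (8 * PI / 3 * (3 * rho0 rs - rhobar) * rs * drs).
Proof.
  intros Htov Hrs Hprs HM Hrho M drs rhobar.
  assert (HR : 0 < Rr) by lra.
  assert (Hdrs : - deform_amplitude rho0 p0 rs / Derive p0 rs = drs)
    by exact (surface_speed_eq rho0 p0 Rr Htov rs Hrs Hprs HM Hrho).
  split; [exact (zero_branch_exists rho0 p0 Rr Htov HR rs Hrs Hprs HM Hrho)|].
  intros rsf Hbr.
  assert (Hd : is_derive rsf 0 drs).
  { rewrite <- Hdrs; exact (zero_branch_derive rho0 p0 Rr Htov HR rs Hrs Hprs HM Hrho rsf Hbr). }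
  split; [exact Hd | split; [rewrite <- Hdrs; exact (surface_speed_pos rho0 p0 Rr Htov rs Hrs Hprs HM Hrho)|]].
  assert (Hc := compactness_derive rho0 p0 Rr Htov HR rs Hrs).
  rewrite <- (proj1 Hbr) in Hc at 1.
  replace (8 * PI / 3 * (3 * rho0 rs - rhobar) * rs * drs)
    with (scal drs (8 * PI * rho0 rs * rs - 2 * mass rho0 rs / rs ^ 2))
    by (unfold scal, rhobar, M; simpl; unfold mult; simpl; field; split; generalize PI_RGT_0; lra).
  exact (is_derive_comp _ _ _ _ _ Hc Hd).
Qed.
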